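(* Let $n\ge 2$, let $\mathcal{S}\subseteq(\mathbb{C}^d)^{\otimes n}$ be the permutation-symmetric subspace, and let $|\psi\rangle,|\varphi\rangle\in\mathcal{S}$ be such that $A_1\otimes\cdots\otimes A_n|\psi\rangle=|\varphi\rangle$ for some invertible $d\times d$ matrices $A_1,\ldots,A_n$. Then there is an invertible $d\times d$ matrix $A$ such that for every $d\times d$ matrix $B$ with $B_{(1)}|\psi\rangle\in\mathcal{S}$ one has $(ABA^{-1})_{(1)}|\varphi\rangle\in\mathcal{S}$, and for every $B'$ with $B'_{(1)}|\varphi\rangle\in\mathcal{S}$ one has $(A^{-1}B'A)_{(1)}|\psi\rangle\in\mathcal{S}$. In particular, the set of Jordan normal forms of matrices $B$ with $B_{(1)}|\psi\rangle\in\mathcal{S}$ coincides with that for $|\varphi\rangle$.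
   Context: $\mathcal{S}$ is the set of vectors in $(\mathbb{C}^d)^{\otimes n}$ invariant under all permutations of the $n$ tensor factors. For a $d\times d$ matrix $Y$, $Y_{(1)}$ denotes $Y\otimes\mathbb{I}\otimes\cdots\otimes\mathbb{I}$ on $(\mathbb{C}^d)^{\otimes n}$. *)

From HB Require Import structures.
From mathcomp Require Import all_boot all_order all_algebra all_fingroup.
Set Implicit Arguments. Unset Strict Implicit. Unset Printing Implicit Defensive.
Import Order.TTheory GRing.Theory Num.Theory.
Local Open Scope ring_scope.

(* Basis index of (C^d)^{⊗n}: a multi-index i : 'I_n -> 'I_d. *)
Definition mindex (n d : nat) := {ffun 'I_n -> 'I_d}.

(* Vectors of (C^d)^{⊗n}, given by their coordinates in the product basis. *)
Definition tensor (C : Type) (n d : nat) := mindex n d -> C.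

Definition permute_index (n d : nat) (s : 'S_n) (i : mindex n d) : mindex n d :=
  [ffun k => i (s k)].

Definition symmetric_tensor (C : Type) (n d : nat) (v : tensor C n d) : Prop :=
  forall (s : 'S_n) (i : mindex n d), v (permute_index s i) = v i.

Definition tensor_prod_apply (C : comRingType) (n d : nat)
    (A : 'I_n -> 'M[C]_d) (v : tensor C n d) : tensor C n d :=
  fun i => \sum_(j : mindex n d) (\prod_(k < n) A k (i k) (j k)) * v j.

(* Y_(k) = I ⊗ ... ⊗ Y (at position k) ⊗ ... ⊗ I applied to a tensor. *)
Definition apply_at (C : ringType) (n d : nat) (k : 'I_n)
    (Y : 'M[C]_d) (v : tensor C n d) : tensor C n d :=
  fun i => \sum_(a < d) Y (i k) a * v [ffun l => if l == k then a else i l].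

From HB Require Import structures.
From mathcomp Require Import all_boot all_order all_algebra all_fingroup.
From mathcomp Require Import ring.
From Stdlib Require Import FunctionalExtensionality.
Set Implicit Arguments. Unset Strict Implicit. Unset Printing Implicit Defensive.
Import Order.TTheory GRing.Theory Num.Theory.
Local Open Scope ring_scope.

(* Write Y_l := A_k^-1 A_l. Comparing phi with its image under the transposition
   (k l) shows that Y_l acting on slot l of psi may be moved to any other slot.
   Collecting all these factors in slot k gives phi = A_k^(x)n D_(k) psi; since
   D_(k) psi = (A_k^-1)^(x)n phi is symmetric, D is movable as well, and so is an
   n-th root R of D that is a polynomial in D. Such a root exists over an
   algebraically closed field of characteristic 0: Hensel lifting at each root of
   the characteristic polynomial of D and the Chinese remainder theorem give p with
   char_poly D %| p^n - X, and Cayley-Hamilton yields p(D)^n = D. Distributing R^n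
   over the n slots gives phi = (A_k R)^(x)n psi, and conjugation by A := A_k R
   transports the one-slot operators keeping psi symmetric to those keeping phi
   symmetric. *)

Section PolyRoots.
Variables (C : numClosedFieldType) (n : nat).
Hypothesis n_gt0 : (0 < n)%N.

(* Hensel lifting: a root of p ^+ n - 'X modulo ('X - lam)^m is corrected by a
   multiple of ('X - lam)^m, using that the derivative n p^(n-1) is invertible at lam. *)
Lemma nroot_modp_XsubC_exp (lam : C) m :
  lam != 0 -> exists p : {poly C}, ('X - lam%:P) ^+ m %| p ^+ n - 'X.
Proof.
move=> lam_neq0; elim: m => [|m [p Hp]]; first by exists 0; rewrite expr0 dvd1p.
case: m Hp => [|m] Hp.
  exists (n.-root lam)%:P; rewrite expr1 dvdp_XsubCl /root !hornerE.
  by rewrite rootCK // subrr.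
set q := 'X - lam%:P.
have /eqP plam : p.[lam] ^+ n == lam.
  have : q %| p ^+ n - 'X by apply: dvdp_trans Hp; rewrite -{1}(expr1 q) dvdp_exp2l.
  by rewrite dvdp_XsubCl /root !hornerE subr_eq0.
have plam_neq0 : p.[lam] != 0.
  by apply: contraNneq lam_neq0 => p0; rewrite -plam p0 expr0n eqn0Ngt n_gt0.
have [r Er] := dvdpP _ _ Hp.
set c := - r.[lam] / (n%:R * p.[lam] ^+ n.-1).
set p' := p + c%:P * q ^+ m.+1.
set S := \sum_(i < n) p' ^+ (n.-1 - i) * p ^+ i.
have Ep' : p' ^+ n - 'X = q ^+ m.+1 * (r + c%:P * S).
  rewrite -(subrK (p ^+ n) (p' ^+ n)) -addrA subrXX -/S Er /p' addrAC subrr add0r.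
  ring.
exists p'; rewrite Ep' exprSr dvdp_mul2l ?expf_neq0 ?polyXsubC_eq0 //.
have p'lam : p'.[lam] = p.[lam] by rewrite /p' !hornerE subrr expr0n /= mulr0 addr0.
rewrite dvdp_XsubCl /root hornerD hornerM hornerC /S horner_sum.
rewrite (eq_bigr (fun _ => p.[lam] ^+ n.-1)); last first.
  by move=> i _; rewrite hornerM !horner_exp p'lam -exprD subnK // -ltnS prednK.
rewrite sumr_const card_ord /c -mulr_natr; apply/eqP; field.
by rewrite expf_neq0 // pnatr_eq0 -lt0n.
Qed.

Lemma dvdp_exp_sub (a p q f : {poly C}) :
  a %| p - q -> a %| q ^+ n - f -> a %| p ^+ n - f.
Proof.
move=> apq aqf; rewrite -(subrK (q ^+ n) (p ^+ n)) -addrA.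
by rewrite dvdp_add // subrXX dvdp_mulr.
Qed.

Lemma nroot_modp_mul (a b p1 p2 : {poly C}) :
  coprimep a b -> a %| p1 ^+ n - 'X -> b %| p2 ^+ n - 'X ->
  exists p, a * b %| p ^+ n - 'X.
Proof.
move=> cop_ab ap1 bp2; have /Bezout_eq1_coprimepP [[u v] /= Euv] := cop_ab.
have Evb : v * b = 1 - u * a by rewrite -Euv; ring.
have Eua : u * a = 1 - v * b by rewrite -Euv; ring.
exists (p1 * (v * b) + p2 * (u * a)); rewrite Gauss_dvdp //; apply/andP; split.
  apply: (dvdp_exp_sub _ ap1).
  by rewrite (_ : _ - p1 = (p2 - p1) * u * a) ?dvdp_mull // Evb; ring.
apply: (dvdp_exp_sub _ bp2).
by rewrite (_ : _ - p2 = (p1 - p2) * v * b) ?dvdp_mull // Eua; ring.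
Qed.

Lemma nroot_modp (g : {poly C}) :
  g != 0 -> ~~ root g 0 -> exists p, g %| p ^+ n - 'X.
Proof.
have [k] := ubnP (size g); elim: k g => // k IHg g sgk g_neq0 g0_neq0.
have [/eqP/size_poly1P [c c_neq0 ->] | sg_neq1] := eqVneq (size g) 1%N.
  by exists 0; apply: dvdp_trans (dvd1p _); rewrite dvdp1 size_polyC c_neq0.
have [lam rootg] := closed_rootP _ sg_neq1.
have lam_neq0 : lam != 0 by apply: contraNneq g0_neq0 => <-.
have [m [g' g'lam Eg]] := multiplicity_XsubC g lam.
rewrite g_neq0 /= in g'lam.
have g'_neq0 : g' != 0 by apply: contraNneq g_neq0 => g'0; rewrite Eg g'0 mul0r.
have m_gt0 : (0 < m)%N.
  by case: m Eg => // Eg; move: rootg; rewrite Eg expr0 mulr1 (negbTE g'lam).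
have sg' : (size g' < size g)%N.
  rewrite Eg size_Mmonic ?monic_exp ?monicXsubC // size_exp_XsubC addnS.
  by rewrite /= -{1}[size g']addn0 ltn_add2l.
have [p2 g'p2] : exists p2, g' %| p2 ^+ n - 'X.
  by apply: IHg (leq_trans sg' sgk) _ _ => //; apply: contra g0_neq0; rewrite Eg rootM => ->.
have [p1 lamp1] := nroot_modp_XsubC_exp m lam_neq0.
have cop : coprimep g' (('X - lam%:P) ^+ m).
  by rewrite coprimep_expr // coprimep_XsubC.
by rewrite Eg; apply: nroot_modp_mul cop g'p2 lamp1.
Qed.

Lemma mx_nroot_horner d (D : 'M[C]_d.+1) :
  D \in unitmx -> exists p, horner_mx D p ^+ n = D.
Proof.
move=> D_unit; have chiD_neq0 : char_poly D != 0 by rewrite monic_neq0 ?char_poly_monic.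
have chiD0_neq0 : ~~ root (char_poly D) 0.
  rewrite /root horner_coef0 char_poly_det mulf_eq0 negb_or signr_eq0 /=.
  by rewrite -unitfE -unitmxE.
have [p /dvdpP [q Eq]] := nroot_modp chiD_neq0 chiD0_neq0.
exists p; apply/eqP; rewrite -subr_eq0.
have := congr1 (horner_mx D) Eq.
by rewrite rmorphM /= Cayley_Hamilton mulr0 rmorphB rmorphXn /= horner_mx_X => <-.
Qed.

End PolyRoots.

Definition permute_tensor (C : Type) n d (s : 'S_n) (v : tensor C n d) : tensor C n d :=
  fun i => v (permute_index s i).

Definition slot (C : nzRingType) n d (k : 'I_n) (Y : 'M[C]_d) : 'I_n -> 'M[C]_d :=
  fun l => if l == k then Y else 1%:M.

Definition slot_independent (C : nzRingType) n d (v : tensor C n d) (Y : 'M[C]_d) :=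
  forall k k' : 'I_n, apply_at k Y v = apply_at k' Y v.

Section Tensors.
Variables (C : comNzRingType) (n d : nat).
Implicit Types (v : tensor C n d) (X : 'I_n -> 'M[C]_d) (Y Z : 'M[C]_d).

Lemma eq_tensor_prod_apply X1 X2 v : X1 =1 X2 ->
  tensor_prod_apply X1 v = tensor_prod_apply X2 v.
Proof. by move=> /functional_extensionality ->. Qed.

Lemma tensor_prod_apply_comp X1 X2 v :
  tensor_prod_apply X1 (tensor_prod_apply X2 v) =
  tensor_prod_apply (fun k => X1 k *m X2 k) v.
Proof.
apply: functional_extensionality => i; rewrite /tensor_prod_apply.
under eq_bigr => j _ do rewrite big_distrr /=.
rewrite exchange_big /=; apply: eq_bigr => l _.
under eq_bigr => j _ do rewrite mulrA.
rewrite -mulr_suml; congr (_ * _).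
rewrite (eq_bigr (fun j : mindex n d =>
  \prod_k (X1 k (i k) (j k) * X2 k (j k) (l k)))) => [|j _]; last by rewrite big_split.
under [RHS]eq_bigr => k _ do rewrite mxE.
by rewrite (bigA_distr_bigA (fun k a => X1 k (i k) a * X2 k a (l k))).
Qed.

Lemma tensor_prod_apply1 v : tensor_prod_apply (fun _ => 1%:M) v = v.
Proof.
apply: functional_extensionality => i; rewrite /tensor_prod_apply.
rewrite (bigD1 i) //= big1 ?mul1r => [|k _]; last by rewrite mxE eqxx.
rewrite big1 ?addr0 // => j ji.
have [k ijk] : exists k, i k != j k.
  apply/existsP; apply: contraNT ji; rewrite negb_exists => /forallP ij.
  by apply/eqP/ffunP => k; move: (ij k); rewrite negbK => /eqP.
by rewrite (bigD1 k) //= mxE (negbTE ijk) mul0r mul0r.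
Qed.

Lemma permute_indexK (s : 'S_n) : cancel (@permute_index n d (s^-1)%g) (permute_index s).
Proof. by move=> i; apply/ffunP => k; rewrite !ffunE permK. Qed.

Lemma permute_index_inj (s : 'S_n) : injective (@permute_index n d s).
Proof. by rewrite -[s]invgK; apply: can_inj (permute_indexK _). Qed.

Lemma symmetric_tensorP v :
  symmetric_tensor v <-> forall s, permute_tensor s v = v.
Proof.
split=> [sym_v s | sym_v s i]; first exact: functional_extensionality (sym_v s).
exact: (congr1 (@^~ i) (sym_v s)).
Qed.

Lemma permute_tensor_prod_apply (s : 'S_n) X v :
  permute_tensor s (tensor_prod_apply X v) =
  tensor_prod_apply (fun k => X ((s^-1)%g k)) (permute_tensor s v).
Proof.
apply: functional_extensionality => i; rewrite /tensor_prod_apply /permute_tensor.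
rewrite [RHS](reindex_inj (@permute_index_inj (s^-1)%g)) /=.
apply: eq_bigr => j _; rewrite permute_indexK; congr (_ * _).
rewrite [RHS](reindex_inj (@perm_inj _ s)) /=.
by apply: eq_bigr => k _; rewrite !ffunE permK.
Qed.

Lemma apply_atE k Y v : apply_at k Y v = tensor_prod_apply (slot k Y) v.
Proof.
apply: functional_extensionality => i; rewrite /tensor_prod_apply /apply_at.
rewrite (partition_big (fun j : mindex n d => j k) predT) //=.
apply: eq_bigr => a _; set u : mindex n d := [ffun l => if l == k then a else i l].
rewrite (bigD1 u) /=; last by rewrite ffunE eqxx.
rewrite [X in _ + X]big1 ?addr0; last move=> j /andP [/eqP jk ju].
  congr (_ * _); rewrite (bigD1 k) //= big1 ?mulr1; last move=> l lk.
    by rewrite /slot eqxx ffunE eqxx.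
  by rewrite /slot (negbTE lk) ffunE (negbTE lk) mxE eqxx.
have [l jul] : exists l, j l != u l.
  apply/existsP; apply: contraNT ju; rewrite negb_exists => /forallP ju.
  by apply/eqP/ffunP => l; move: (ju l); rewrite negbK => /eqP.
have lk : l != k by apply: contraNneq jul => ->; rewrite jk ffunE eqxx.
move: jul; rewrite ffunE (negbTE lk) => jil.
by rewrite (bigD1 l) //= /slot (negbTE lk) mxE eq_sym (negbTE jil) mul0r mul0r.
Qed.

Lemma permute_apply_at (s : 'S_n) k Y v :
  permute_tensor s (apply_at k Y v) = apply_at (s k) Y (permute_tensor s v).
Proof.
rewrite !apply_atE permute_tensor_prod_apply; apply: eq_tensor_prod_apply => l.
by rewrite /slot -(inj_eq (@perm_inj _ s)) permKV.
Qed.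

Lemma apply_at_comp k Y Z v : apply_at k Y (apply_at k Z v) = apply_at k (Y *m Z) v.
Proof.
rewrite !apply_atE tensor_prod_apply_comp; apply: eq_tensor_prod_apply => l.
by rewrite /slot; case: eqP => // _; rewrite mul1mx.
Qed.

Lemma apply_atC k k' Y Z v : k != k' ->
  apply_at k Y (apply_at k' Z v) = apply_at k' Z (apply_at k Y v).
Proof.
move=> kk'; rewrite !apply_atE !tensor_prod_apply_comp.
apply: eq_tensor_prod_apply => l; rewrite /slot.
have [->|lk] := eqVneq l k; first by rewrite (negbTE kk') mulmx1 mul1mx.
by case: eqP => _; rewrite ?mulmx1 ?mul1mx.
Qed.

Lemma apply_atD k Y Z v i :
  apply_at k (Y + Z) v i = apply_at k Y v i + apply_at k Z v i.
Proof. by rewrite /apply_at -big_split; apply: eq_bigr => a _; rewrite mxE mulrDl. Qed.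

Lemma apply_at_scalar k (c : C) v i : apply_at k c%:M v i = c * v i.
Proof.
rewrite /apply_at (bigD1 (i k)) //= big1 ?addr0 => [|a ika]; last first.
  by rewrite mxE eq_sym (negbTE ika) mul0r.
rewrite mxE eqxx; congr (_ * v _); apply/ffunP => l.
by rewrite ffunE; case: eqP => [->|].
Qed.

Lemma symmetric_tensor_prod_const G v : symmetric_tensor v ->
  symmetric_tensor (tensor_prod_apply (fun _ => G) v).
Proof.
by move=> /symmetric_tensorP sym_v; apply/symmetric_tensorP => s;
  rewrite permute_tensor_prod_apply sym_v.
Qed.

End Tensors.

Section SlotIndependent.
Variables (C : comNzRingType) (n d : nat).
Implicit Types (v : tensor C n d) (X : 'I_n -> 'M[C]_d) (Y Z : 'M[C]_d).

Lemma symmetric_apply_atP v k Y : symmetric_tensor v ->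
  symmetric_tensor (apply_at k Y v) <-> slot_independent v Y.
Proof.
move=> /symmetric_tensorP sym_v; split=> [/symmetric_tensorP sym_w | indep_Y].
  suff Ek k' : apply_at k' Y v = apply_at k Y v by move=> k1 k2; rewrite !Ek.
  by rewrite -[RHS](sym_w (tperm k k')) permute_apply_at sym_v tpermL.
by apply/symmetric_tensorP => s; rewrite permute_apply_at sym_v.
Qed.

Lemma slot_independent_transposition v k k' Y : symmetric_tensor v -> k != k' ->
  apply_at k Y v = apply_at k' Y v -> slot_independent v Y.
Proof.
move=> /symmetric_tensorP sym_v kk' EY.
suff Ej j : apply_at j Y v = apply_at k' Y v by move=> j1 j2; rewrite !Ej.
have [->//|jk'] := eqVneq j k'.
have := congr1 (permute_tensor (tperm k j)) EY.
by rewrite !permute_apply_at sym_v tpermL tpermD.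
Qed.

Lemma slot_independent_scalar v c : slot_independent v c%:M.
Proof.
by move=> k k'; apply: functional_extensionality => i; rewrite !apply_at_scalar.
Qed.

Lemma slot_independentD v Y Z :
  slot_independent v Y -> slot_independent v Z -> slot_independent v (Y + Z).
Proof.
move=> indep_Y indep_Z k k'; apply: functional_extensionality => i.
by rewrite !apply_atD (indep_Y k k') (indep_Z k k').
Qed.

(* Moving Y and Z across distinct slots only swaps their order, so commutation is needed. *)
Lemma slot_independentM v Y Z : Y *m Z = Z *m Y ->
  slot_independent v Y -> slot_independent v Z -> slot_independent v (Y *m Z).
Proof.
move=> YZ indep_Y indep_Z k k'; have [->//|kk'] := eqVneq k k'.
by rewrite -apply_at_comp (indep_Z k k') apply_atC // (indep_Y k k') apply_at_comp -YZ.
Qed.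

(* Each X a is moved from slot a to slot k, where it acts before X k. *)
Lemma tensor_prod_apply_collect v k X (s : seq 'I_n) :
  uniq s -> k \notin s -> (forall l, l \in s -> slot_independent v (X l)) ->
  (forall l, l != k -> l \notin s -> X l = 1%:M) ->
  tensor_prod_apply X v = apply_at k (X k *m \prod_(l <- s) X l) v.
Proof.
elim: s X => [|a s IHs] X uniq_s k_s indep_X X1.
  rewrite big_nil mulmx1 apply_atE; apply: eq_tensor_prod_apply => l.
  by rewrite /slot; case: eqP => [->|/eqP lk] //; apply: X1.
move: uniq_s k_s; rewrite cons_uniq inE negb_or => /andP [a_s uniq_s] /andP [ka k_s].
set X' := fun l => if l == k then X k *m X a else if l == a then 1%:M else X l.
have EX : tensor_prod_apply X v = tensor_prod_apply X' v.
  transitivity (tensor_prod_apply (fun l => if l == a then 1%:M else X l)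
                  (apply_at a (X a) v)).
    rewrite apply_atE tensor_prod_apply_comp; apply: eq_tensor_prod_apply => l.
    by rewrite /slot; case: eqP => [->|_]; rewrite ?mul1mx ?mulmx1.
  rewrite (indep_X a (mem_head _ _) a k) apply_atE tensor_prod_apply_comp.
  apply: eq_tensor_prod_apply => l; rewrite /X' /slot.
  have [->|_] := eqVneq l k; first by rewrite (negbTE ka).
  by rewrite mulmx1.
rewrite EX (IHs X') //.
- rewrite big_cons /X' eqxx mulmxA -mulmxE; congr (apply_at _ (_ *m _) _).
  apply: eq_big_seq => l l_s; rewrite ifN ?ifN //; first by apply: contraNneq a_s => <-.
  by apply: contraNneq k_s => <-.
- move=> l l_s; rewrite /X' ifN; last by apply: contraNneq k_s => <-.
  by case: eqP => _; [apply: slot_independent_scalar | apply/indep_X/mem_behead].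
- move=> l lk l_s; rewrite /X' (negbTE lk); case: eqP => // /eqP la.
  by apply: X1; rewrite // inE negb_or la.
Qed.

Lemma tensor_prod_apply_slot_independent v k X :
  (forall l, l != k -> slot_independent v (X l)) ->
  tensor_prod_apply X v = apply_at k (X k *m \prod_(l < n | l != k) X l) v.
Proof.
move=> indep_X; rewrite -big_filter; apply: tensor_prod_apply_collect.
- by rewrite filter_uniq ?index_enum_uniq.
- by rewrite mem_filter eqxx.
- by move=> l; rewrite mem_filter => /andP [/indep_X].
- by move=> l lk; rewrite mem_filter lk mem_index_enum.
Qed.

End SlotIndependent.

Lemma slot_independent_horner (C : comNzRingType) n d (v : tensor C n d.+1) D p :
  slot_independent v D -> slot_independent v (horner_mx D p).
Proof.
move=> indep_D; elim/poly_ind: p => [|p c indep_p].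
  by rewrite rmorph0 -(raddf0 (@scalar_mx C d.+1)); apply: slot_independent_scalar.
rewrite rmorphD rmorphM /= horner_mx_X horner_mx_C -mulmxE.
apply: slot_independentD (slot_independent_scalar _ _).
by apply: slot_independentM => //; apply: comm_horner_mx (comm_mx_refl _).
Qed.

Section Conjugation.
Variables (C : comUnitRingType) (n d : nat).
Implicit Types (v : tensor C n d) (A : 'I_n -> 'M[C]_d) (B G : 'M[C]_d).

Lemma tensor_prod_apply_invK A v : (forall k, A k \in unitmx) ->
  tensor_prod_apply (fun k => invmx (A k)) (tensor_prod_apply A v) = v.
Proof.
move=> A_unit; rewrite tensor_prod_apply_comp -[RHS]tensor_prod_apply1.
by apply: eq_tensor_prod_apply => k; rewrite mulVmx.
Qed.

Lemma slot_independent_quotient psi A k l : symmetric_tensor psi ->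
  symmetric_tensor (tensor_prod_apply A psi) -> (forall k, A k \in unitmx) ->
  slot_independent psi (invmx (A k) *m A l).
Proof.
move=> sym_psi /symmetric_tensorP sym_phi A_unit.
have [->|lk] := eqVneq l k; first by rewrite mulVmx //; apply: slot_independent_scalar.
apply: (slot_independent_transposition sym_psi lk).
have := sym_phi (tperm k l).
rewrite permute_tensor_prod_apply ((symmetric_tensorP _).1 sym_psi) tpermV => Ephi.
rewrite -{1}(tensor_prod_apply_invK psi A_unit) -Ephi !apply_atE !tensor_prod_apply_comp.
apply: eq_tensor_prod_apply => j; rewrite /slot.
have [->|jl] := eqVneq j l; first by rewrite tpermR (negbTE lk) mulmxK ?mulVmx.
have [->|jk] := eqVneq j k; first by rewrite tpermL mul1mx.
by rewrite tpermD 1?eq_sym // mul1mx mulVmx.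
Qed.

Lemma tensor_prod_apply_const_apply_at G k B v : G \in unitmx ->
  tensor_prod_apply (fun _ => G) (apply_at k B v) =
  apply_at k (G *m B *m invmx G) (tensor_prod_apply (fun _ => G) v).
Proof.
move=> G_unit; rewrite !apply_atE !tensor_prod_apply_comp.
by apply: eq_tensor_prod_apply => l; rewrite /slot; case: eqP; rewrite ?mulmxKV ?mul1mx ?mulmx1.
Qed.

End Conjugation.

Lemma symmetric_tensor_prod_orbit (C : numClosedFieldType) n d
    (psi : tensor C n d) (A : 'I_n -> 'M[C]_d) :
  (0 < n)%N -> symmetric_tensor psi -> symmetric_tensor (tensor_prod_apply A psi) ->
  (forall k, A k \in unitmx) ->
  exists2 G, G \in unitmx & tensor_prod_apply (fun _ => G) psi = tensor_prod_apply A psi.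
Proof.
case: d psi A => [|d] psi A n_gt0 sym_psi sym_Apsi A_unit.
  exists 1%:M; first exact: unitmx1.
  by apply: eq_tensor_prod_apply => k; rewrite [LHS]flatmx0 [RHS]flatmx0.
set k := Ordinal n_gt0; set X := fun l => invmx (A k) *m A l.
set D := X k *m \prod_(l < n | l != k) X l.
have ED : tensor_prod_apply X psi = apply_at k D psi.
  by apply: tensor_prod_apply_slot_independent => l _; apply: slot_independent_quotient.
have EA : tensor_prod_apply A psi = tensor_prod_apply (fun _ => A k) (apply_at k D psi).
  by rewrite -ED tensor_prod_apply_comp; apply: eq_tensor_prod_apply => l; rewrite mulKVmx.
have D_unit : D \in unitmx.
  have X_unit l : X l \in unitmx by rewrite unitmx_mul unitmx_inv !A_unit.
  rewrite unitmx_mul X_unit; apply: (big_ind (fun M => M \in unitmx)) => // [|M N M_unit N_unit].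
  - exact: unitmx1.
  - by rewrite -mulmxE unitmx_mul M_unit.
have indep_D : slot_independent psi D.
  apply: ((symmetric_apply_atP k D sym_psi).1).
  rewrite -[apply_at _ _ _](tensor_prod_apply_invK _ (fun=> A_unit k)) -EA.
  exact: symmetric_tensor_prod_const sym_Apsi.
have [p ERn] := mx_nroot_horner n_gt0 D_unit; set R := horner_mx D p.
have ER : tensor_prod_apply (fun _ => R) psi = apply_at k D psi.
  rewrite (tensor_prod_apply_slot_independent (k := k)) => [|l _]; last first.
    exact: slot_independent_horner indep_D.
  by rewrite (prodr_const (predC1 k)) cardC1 card_ord mulmxE -exprS prednK // ERn.
exists (A k *m R); last by rewrite EA -ER tensor_prod_apply_comp.
rewrite unitmx_mul A_unit /=.
by move: D_unit; rewrite -ERn -(prednK n_gt0) exprS -mulmxE unitmx_mul => /andP [].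
Qed.

Theorem mainTheorem9 (C : numClosedFieldType) (n d : nat) (hn : (1 < n)%N)
    (psi phi : tensor C n d)
    (Hpsi : symmetric_tensor psi) (Hphi : symmetric_tensor phi)
    (A : 'I_n -> 'M[C]_d) (HA : forall k, A k \in unitmx)
    (Hmap : tensor_prod_apply A psi = phi) :
  exists Am : 'M[C]_d,
    Am \in unitmx /\
    (forall B : 'M[C]_d,
        symmetric_tensor (apply_at (Ordinal (ltnW hn)) B psi) ->
        symmetric_tensor (apply_at (Ordinal (ltnW hn)) (Am *m B *m invmx Am) phi)) /\
    (forall B' : 'M[C]_d,
        symmetric_tensor (apply_at (Ordinal (ltnW hn)) B' phi) ->
        symmetric_tensor (apply_at (Ordinal (ltnW hn)) (invmx Am *m B' *m Am) psi)).
Proof.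
have sym_Apsi : symmetric_tensor (tensor_prod_apply A psi) by rewrite Hmap.
have [G G_unit] := symmetric_tensor_prod_orbit (ltnW hn) Hpsi sym_Apsi HA.
rewrite Hmap => EG.
have Epsi : tensor_prod_apply (fun _ => invmx G) phi = psi.
  by rewrite -EG (tensor_prod_apply_invK _ (fun=> G_unit)).
exists G; split=> //; split=> [B | B'] sym_B.
  rewrite -EG -tensor_prod_apply_const_apply_at //.
  exact: symmetric_tensor_prod_const sym_B.
have invG_unit : invmx G \in unitmx by rewrite unitmx_inv.
have := tensor_prod_apply_const_apply_at (Ordinal (ltnW hn)) B' phi invG_unit.
rewrite invmxK Epsi => <-; exact: symmetric_tensor_prod_const sym_B.
Qed.
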